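(* Let $p,q$ be relatively prime integers with $1\le q<p$, write $p^2/(pq-1)=[b_1,\dots,b_r]$ and $p^2/(p^2-pq+1)=[a_1,\dots,a_e]$ (all entries $\ge 2$), and let $(i(\delta),j(\delta))$ be the $\delta$-position of $[b_1,\dots,b_r]$. Then, starting from (a regular neighborhood of) the $\delta$-half linear chain corresponding to $p^2/(pq-1)$ and blowing up appropriately (finitely many times, at points of the configuration, taking total transforms), one obtains (a regular neighborhood of) the linear chain of $2$-spheres $$B_1 - B_2 - \cdots - B_r - C - A_e - A_{e-1} - \cdots - A_{j(\delta)+2}$$ with self-intersections $B_i\cdot B_i=-b_i$, $C\cdot C=-1$, $A_k\cdot A_k=-a_k$ (where the part $A_e,\dots,A_{j(\delta)+2}$ is empty if $j(\delta)+2>e$).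
   Context: Hirzebruch--Jung continued fractions: $[b_r]=b_r$ and $[b_i,\dots,b_r]=b_i-1/[b_{i+1},\dots,b_r]$; for coprime $1\le a<n$, $n/a=[b_1,\dots,b_r]$ uniquely with all $b_i\ge2$, and the linear chain corresponding to $n/a$ is a chain of $2$-spheres (or smooth rational curves) $S_1,\dots,S_r$, $S_i\cdot S_i=-b_i$, consecutive ones meeting transversally once, others disjoint. Riemenschneider's dot diagram of $[b_1,\dots,b_r]$: place $b_i-1$ dots in row $i$, the first dot of row $i$ directly under the last dot of row $i-1$; column $j$ then contains $a_j-1$ dots where $n/(n-a)=[a_1,\dots,a_e]$. For $p^2/(pq-1)=[b_1,\dots,b_r]$ one has $\sum_i(b_i-1)=2r+1$; the dot $\delta$ is the $(r+1)$-th dot in reading order (rows top to bottom, each left to right), and its $\delta$-position $(i(\delta),j(\delta))$ is its row and column. The $\delta$-half linear chain is the linear chain $[b_1,\dots,b_{i(\delta)-1},b'_{i(\delta)}]$ whose dot diagram consists of the dots in rows $1,\dots,i(\delta)$ and columns $1,\dots,j(\delta)$ of the original diagram; equivalently $b'_{i(\delta)}-1$ is the number of dots of row $i(\delta)$ up to and including $\delta$. *)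

From mathcomp Require Import all_boot all_order all_algebra.
Set Implicit Arguments. Unset Strict Implicit. Unset Printing Implicit Defensive.
Import Order.TTheory GRing.Theory Num.Theory.

Fixpoint cf_val (s : seq nat) : rat :=
  match s with
  | [::] => 0
  | [:: b] => (b%:R)%R
  | b :: s' => (b%:R - (cf_val s')^-1)%R
  end.

(* Row i (1-based) carries b_i - 1 dots; the first dot of row i+1 lies in the
   column of the last dot of row i, row 1 starts at column 1.
   dot_pos_aux bs k i c : position (row, column) of the k-th dot (1-based, in
   reading order) of the diagram of bs, whose first row has index i and
   starts at column c. *)
Fixpoint dot_pos_aux (bs : seq nat) (k i c : nat) : nat * nat :=
  match bs with
  | [::] => (0, 0)
  | b :: bs' => if k <= b.-1 then (i, c + k - 1)
                else dot_pos_aux bs' (k - b.-1) i.+1 (c + b - 2)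
  end.

Definition dot_pos (bs : seq nat) (k : nat) : nat * nat := dot_pos_aux bs k 1 1.

Definition delta_pos (bs : seq nat) : nat * nat := dot_pos bs (size bs).+1.

(* The half chain cut at the k-th dot: [b_1,...,b_{i-1}, b'_i] where b'_i - 1 is
   the number of dots of row i up to and including the k-th dot. *)
Fixpoint half_chain_at (bs : seq nat) (k : nat) : seq nat :=
  match bs with
  | [::] => [::]
  | b :: bs' => if k <= b.-1 then [:: k.+1]
                else b :: half_chain_at bs' (k - b.-1)
  end.

Definition delta_half_chain (bs : seq nat) : seq nat :=
  half_chain_at bs (size bs).+1.

(* Curves are numbered 0 .. size cw - 1; cw gives self-intersections; ce lists
   the (transverse, single) intersection points as unordered pairs. *)
Record config := Config { cw : seq int; ce : seq (nat * nat) }.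

Definition adj (c : config) (i j : nat) : bool :=
  ((i, j) \in ce c) || ((j, i) \in ce c).

(* blow up a point lying on exactly one curve v (total transform) *)
Definition blow_pt (c : config) (v : nat) : config :=
  Config (rcons (set_nth 0%R (cw c) v (nth 0%R (cw c) v - 1)%R) (-1)%R)
         ((v, size (cw c)) :: ce c).

Definition blow_int (c : config) (u v : nat) : config :=
  let w1 := set_nth 0%R (cw c) u (nth 0%R (cw c) u - 1)%R in
  let w2 := set_nth 0%R w1 v (nth 0%R w1 v - 1)%R in
  Config (rcons w2 (-1)%R)
         ((u, size (cw c)) :: (v, size (cw c)) ::
            [seq e <- ce c | (e != (u, v)) && (e != (v, u))]).

Inductive blowup_step : config -> config -> Prop :=
  | BS_pt c v : v < size (cw c) -> blowup_step c (blow_pt c v)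
  | BS_int c u v : u != v -> adj c u v -> blowup_step c (blow_int c u v).

Inductive blowups : config -> config -> Prop :=
  | BL_refl c : blowups c c
  | BL_step c1 c2 c3 : blowup_step c1 c2 -> blowups c2 c3 -> blowups c1 c3.

Definition chain_config (ws : seq int) : config :=
  Config ws [seq (i, i.+1) | i <- iota 0 (size ws).-1].

Definition is_linear_chain (c : config) (ws : seq int) : Prop :=
  size (cw c) = size ws /\
  exists s : seq nat, perm_eq s (iota 0 (size ws)) /\
    (forall i, i < size ws -> nth 0%R (cw c) (nth 0 s i) = nth 0%R ws i) /\
    (forall i j, i < size ws -> j < size ws ->
       adj c (nth 0 s i) (nth 0 s j) = (i == j.+1) || (j == i.+1)).

Definition neg_weights (bs : seq nat) : seq int := [seq (- (b%:Z))%R | b <- bs].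

From mathcomp Require Import all_boot all_order all_algebra.
From mathcomp Require Import zify ring lra.
Set Implicit Arguments. Unset Strict Implicit. Unset Printing Implicit Defensive.
Import Order.TTheory GRing.Theory Num.Theory.

(* The chains p^2/(pq-1) with p, q coprime are the Wahl chains: they arise from
   [4] by the steps [b_1,...,b_r] -> [b_1+1,...,b_r,2] and
   [b_1,...,b_r] -> [2,b_1,...,b_r+1], while the dual chains p^2/(p^2-pq+1) arise
   from [2,2,2] by the same steps with their roles exchanged.  The sequence of steps
   is found by a Euclidean descent on (p,q), checked on the products of the matrices
   [[b,-1],[1,0]], whose first column is the numerator and denominator of the
   continued fraction.  Under the first step the delta-half chain gains 1 in its
   first entry and delta moves one column to the right; under the second a 2 is
   prepended and the column of delta is unchanged.  Accordingly, after a first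
   blow-up creating the (-1)-curve C, each step costs one blow-up at a point of C
   (a general point, or its intersection with a neighbour), and these blow-ups turn
   the delta-half chain into B_1 - ... - B_r - C - A_e - ... - A_(j+2). *)

Notation entries_ge2 s := (all (fun b => 2 <= b) s).

Definition incr_head (s : seq nat) : seq nat := if s is x :: t then x.+1 :: t else [::].

Fixpoint incr_last (s : seq nat) : seq nat :=
  match s with [::] => [::] | [:: x] => [:: x.+1] | x :: t => x :: incr_last t end.

Definition dot_count (s : seq nat) : nat := sumn [seq b.-1 | b <- s].

Lemma size_incr_head s : size (incr_head s) = size s.
Proof. by case: s. Qed.

Lemma incr_head_cat s t : 0 < size s -> incr_head (s ++ t) = incr_head s ++ t.
Proof. by case: s. Qed.

Lemma drop_incr_head k s : drop k.+1 (incr_head s) = drop k.+1 s.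
Proof. by case: s. Qed.

Lemma all_incr_head s : entries_ge2 s -> entries_ge2 (incr_head s).
Proof. by case: s => [//|x t] /= /andP[hx ->]; rewrite andbT ltnW. Qed.

Lemma incr_last_rcons s x : incr_last (rcons s x) = rcons s x.+1.
Proof.
elim: s => [//|y t IH]; rewrite rcons_cons.
case E: (rcons t x) => [|z u]; first by case: t E IH.
by rewrite -E [LHS]/= -/(incr_last (rcons t x)) IH E.
Qed.

Lemma size_incr_last s : size (incr_last s) = size s.
Proof. by case/lastP: s => [//|t x]; rewrite incr_last_rcons !size_rcons. Qed.

Lemma rev_incr_last s : rev (incr_last s) = incr_head (rev s).
Proof. by case/lastP: s => [//|t x]; rewrite incr_last_rcons !rev_rcons. Qed.

Lemma drop_incr_last k s : drop k (incr_last s) = incr_last (drop k s).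
Proof.
case/lastP: s => [|t x]; first by case: k.
rewrite incr_last_rcons; case: (leqP k (size t)) => hk.
  by rewrite !drop_rcons // incr_last_rcons.
by rewrite !drop_oversize // size_rcons.
Qed.

Lemma all_incr_last s : entries_ge2 s -> entries_ge2 (incr_last s).
Proof.
case/lastP: s => [//|t x]; rewrite incr_last_rcons !all_rcons => /andP[hx ->].
by rewrite andbT ltnW.
Qed.

Lemma dot_count_rcons s x : dot_count (rcons s x) = dot_count s + x.-1.
Proof. by rewrite /dot_count map_rcons -cats1 sumn_cat /= addn0. Qed.

Lemma dot_count_incr_head s :
  0 < size s -> entries_ge2 s -> dot_count (incr_head s) = (dot_count s).+1.
Proof. by case: s => [//|x t] _ /andP[hx _]; rewrite /dot_count /=; lia. Qed.

Lemma dot_count_incr_last s :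
  0 < size s -> entries_ge2 s -> dot_count (incr_last s) = (dot_count s).+1.
Proof.
case/lastP: s => [//|t x] _; rewrite incr_last_rcons !dot_count_rcons all_rcons.
by case/andP=> hx _; lia.
Qed.

Lemma dot_pos_aux_col_succ s k i c : entries_ge2 s -> 1 <= k <= dot_count s ->
  (dot_pos_aux s k i c.+1).2 = (dot_pos_aux s k i c).2.+1.
Proof.
elim: s k i c => [|b s IH] k i c /=; first by rewrite /dot_count /=; lia.
case/andP=> hb hs hk; case: ifP => h /=; first lia.
have -> : c.+1 + b - 2 = (c + b - 2).+1 by lia.
by apply: IH => //; move: hk h; rewrite /dot_count /=; lia.
Qed.

Lemma dot_pos_aux_col_row s k i i' c :
  (dot_pos_aux s k i c).2 = (dot_pos_aux s k i' c).2.
Proof. by elim: s k i i' c => [|b s IH] k i i' c //=; case: ifP. Qed.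

Lemma dot_pos_aux_rcons s x k i c : 1 <= k <= dot_count s ->
  dot_pos_aux (rcons s x) k i c = dot_pos_aux s k i c.
Proof.
elim: s k i c => [|b s IH] k i c /=; first by rewrite /dot_count /=; lia.
by move=> hk; case: ifP => h //; apply: IH; move: hk h; rewrite /dot_count /=; lia.
Qed.

Lemma half_chain_at_rcons s x k : 1 <= k <= dot_count s ->
  half_chain_at (rcons s x) k = half_chain_at s k.
Proof.
elim: s k => [|b s IH] k /=; first by rewrite /dot_count /=; lia.
move=> hk; case: ifP => h //.
by rewrite IH //; move: hk h; rewrite /dot_count /=; lia.
Qed.

Lemma dot_pos_aux_incr_last s k i c : 1 <= k <= dot_count s ->
  dot_pos_aux (incr_last s) k i c = dot_pos_aux s k i c.
Proof.
elim: s k i c => [|b [|b2 s] IH] k i c; rewrite /dot_count /=.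
- lia.
- by move=> hk; rewrite !ifT //; lia.
- move=> hk; case: ifP => h //.
  by apply: IH; move: hk h; rewrite /dot_count /=; lia.
Qed.

Lemma half_chain_at_incr_last s k : 1 <= k <= dot_count s ->
  half_chain_at (incr_last s) k = half_chain_at s k.
Proof.
elim: s k => [|b [|b2 s] IH] k; rewrite /dot_count /=.
- lia.
- by move=> hk; rewrite !ifT //; lia.
- move=> hk; case: ifP => h //.
  by rewrite IH //; move: hk h; rewrite /dot_count /=; lia.
Qed.

Definition wahl_step (o : bool) (s : seq nat) : seq nat :=
  if o then incr_head (rcons s 2) else 2 :: incr_last s.

Section DeltaWahlStep.

Variable s : seq nat.
Hypothesis s_ge2 : entries_ge2 s.
Hypothesis s_dots : dot_count s = (size s).*2.+1.

Lemma delta_wahl_step_true :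
  (delta_pos (wahl_step true s)).2 = (delta_pos s).2.+1 /\
  delta_half_chain (wahl_step true s) = incr_head (delta_half_chain s).
Proof.
case: s s_ge2 s_dots => [//|b t] /= /andP[hb ht] hdots.
rewrite /delta_pos /dot_pos /delta_half_chain /= size_rcons.
have -> : ((size t).+2 < b) = ((size t).+1 < b.-1) by apply/idP/idP; lia.
case: ifP => h /=; first by split => //; lia.
have -> : (size t).+3 - b = (size t).+2 - b.-1 by lia.
have hk : 1 <= (size t).+2 - b.-1 <= dot_count t.
  by move: hdots h; rewrite /dot_count /=; lia.
rewrite dot_pos_aux_rcons // half_chain_at_rcons //; split => //.
have -> : 1 + b.+1 - 2 = (1 + b - 2).+1 by lia.
exact: dot_pos_aux_col_succ.
Qed.

Lemma delta_wahl_step_false :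
  (delta_pos (wahl_step false s)).2 = (delta_pos s).2 /\
  delta_half_chain (wahl_step false s) = 2 :: delta_half_chain s.
Proof.
rewrite /delta_pos /dot_pos /delta_half_chain /= size_incr_last subn1 /=.
have hk : 1 <= (size s).+1 <= dot_count s by lia.
rewrite dot_pos_aux_incr_last // half_chain_at_incr_last //.
by split => //; apply: dot_pos_aux_col_row.
Qed.

End DeltaWahlStep.

Definition wahl_chain (w : seq bool) : seq nat := foldr wahl_step [:: 4] w.

Definition dual_wahl_chain (w : seq bool) : seq nat :=
  foldr (fun o => wahl_step (~~ o)) [:: 2; 2; 2] w.

Lemma wahl_chain_cons o w : wahl_chain (o :: w) = wahl_step o (wahl_chain w).
Proof. by []. Qed.

Lemma dual_wahl_chain_cons o w :
  dual_wahl_chain (o :: w) = wahl_step (~~ o) (dual_wahl_chain w).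
Proof. by []. Qed.

Lemma wahl_chain_invariants w :
  [/\ entries_ge2 (wahl_chain w), dot_count (wahl_chain w) = (size (wahl_chain w)).*2.+1,
      size (dual_wahl_chain w) = (size (wahl_chain w)).+2 &
      (delta_pos (wahl_chain w)).2 <= (size (wahl_chain w)).+1].
Proof.
elim: w => [|o w [ge2 dots sz_dual delta_le]]; first by [].
have hs : 0 < size (wahl_chain w) by case: (wahl_chain w) dots.
rewrite wahl_chain_cons dual_wahl_chain_cons; case: o.
- have [-> _] := delta_wahl_step_true ge2 dots.
  rewrite /wahl_step /= all_incr_head ?all_rcons ?ge2 //.
  rewrite dot_count_incr_head ?size_rcons ?all_rcons ?ge2 // dot_count_rcons.
  by rewrite size_incr_head !size_rcons size_incr_last sz_dual dots; split; lia.
- have [-> _] := delta_wahl_step_false ge2 dots.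
  rewrite /wahl_step /= all_incr_last // /dot_count /= -/(dot_count _).
  rewrite dot_count_incr_last // size_incr_last size_incr_head size_rcons.
  by rewrite sz_dual dots; split; lia.
Qed.

Lemma size_wahl_chain_gt0 w : 0 < size (wahl_chain w).
Proof. by have [_ dots _ _] := wahl_chain_invariants w; case: (wahl_chain w) dots. Qed.

Lemma dual_wahl_chain_ge2 w : entries_ge2 (dual_wahl_chain w).
Proof.
elim: w => [//|o w IH]; rewrite dual_wahl_chain_cons /wahl_step; case: o => /=.
  by rewrite all_incr_last.
by rewrite all_incr_head // all_rcons IH.
Qed.

Lemma coprime_subl m n : n <= m -> coprime (m - n) n = coprime m n.
Proof. by move=> h; rewrite !(coprime_sym _ n) -{2}(subnKC h) /coprime gcdnDl. Qed.

Lemma coprime_double_sub p q : p <= q.*2 -> coprime q (q.*2 - p) = coprime q p.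
Proof.
move=> h; have -> : q.*2 - p = `|(2 * q%:Z + - p%:Z)%R|%N by lia.
by rewrite -(coprimezE q) /coprimez gcdzMDl gcdzN.
Qed.

Section ContinuedFractionMatrices.

Local Open Scope ring_scope.

Record mx2 := Mx2 { m11 : int; m12 : int; m21 : int; m22 : int }.

Definition mx2_mul (x y : mx2) : mx2 :=
  Mx2 (m11 x * m11 y + m12 x * m21 y) (m11 x * m12 y + m12 x * m22 y)
      (m21 x * m11 y + m22 x * m21 y) (m21 x * m12 y + m22 x * m22 y).

Definition mx2_1 : mx2 := Mx2 1 0 0 1.
Definition mx2_upper : mx2 := Mx2 1 1 0 1.
Definition mx2_lower : mx2 := Mx2 1 0 (-1) 1.
Definition hj_mx (b : nat) : mx2 := Mx2 b%:Z (-1) 1 0.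

Fixpoint cf_mx (s : seq nat) : mx2 :=
  if s is b :: t then mx2_mul (hj_mx b) (cf_mx t) else mx2_1.

Lemma mx2_mulA : associative mx2_mul.
Proof.
by case=> ? ? ? ? [? ? ? ?] [? ? ? ?]; rewrite /mx2_mul /=; congr Mx2; ring.
Qed.

Lemma mx2_mul1 : right_id mx2_1 mx2_mul.
Proof. by case=> ? ? ? ?; rewrite /mx2_mul /=; congr Mx2; ring. Qed.

Lemma mx2_1mul : left_id mx2_1 mx2_mul.
Proof. by case=> ? ? ? ?; rewrite /mx2_mul /=; congr Mx2; ring. Qed.

Lemma cf_mx_cat s t : cf_mx (s ++ t) = mx2_mul (cf_mx s) (cf_mx t).
Proof. by elim: s => [|b s IH] /=; rewrite ?mx2_1mul // IH mx2_mulA. Qed.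

Lemma cf_mx_rcons s b : cf_mx (rcons s b) = mx2_mul (cf_mx s) (hj_mx b).
Proof. by rewrite -cats1 cf_mx_cat /= mx2_mul1. Qed.

Lemma cf_mx_incr_head s : (0 < size s)%N ->
  cf_mx (incr_head s) = mx2_mul mx2_upper (cf_mx s).
Proof.
case: s => [//|b t] _ /=; rewrite mx2_mulA; congr mx2_mul.
by rewrite /mx2_mul /=; congr Mx2; rewrite ?PoszS; ring.
Qed.

Lemma cf_mx_incr_last s : (0 < size s)%N ->
  cf_mx (incr_last s) = mx2_mul (cf_mx s) mx2_lower.
Proof.
case/lastP: s => [//|t x] _; rewrite incr_last_rcons !cf_mx_rcons -mx2_mulA.
by congr mx2_mul; rewrite /mx2_mul /=; congr Mx2; rewrite ?PoszS; ring.
Qed.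

Lemma cf_mx_wahl_step o s : (0 < size s)%N ->
  cf_mx (wahl_step o s) =
    if o then mx2_mul mx2_upper (mx2_mul (cf_mx s) (hj_mx 2))
    else mx2_mul (hj_mx 2) (mx2_mul (cf_mx s) mx2_lower).
Proof.
case: o => hs /=; last by rewrite cf_mx_incr_last.
by rewrite cf_mx_incr_head ?size_rcons // cf_mx_rcons.
Qed.

Definition wahl_mx (P Q : int) : mx2 :=
  Mx2 (P ^+ 2) (- (P ^+ 2 - P * Q - 1)) (P * Q - 1) (- (P * Q - Q ^+ 2 - 1)).

Definition dual_wahl_mx (P Q : int) : mx2 :=
  Mx2 (P ^+ 2) (- (P * Q + 1)) (P ^+ 2 - P * Q + 1) (- (P * Q - Q ^+ 2 + 1)).

Lemma cf_mx_wahl_steps o s t P Q :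
  cf_mx s = wahl_mx P Q -> cf_mx t = dual_wahl_mx P Q ->
  (0 < size s)%N -> (0 < size t)%N ->
  let P' := if o then P + Q else 2 * P - Q in
  let Q' := if o then Q else P in
  cf_mx (wahl_step o s) = wahl_mx P' Q' /\
  cf_mx (wahl_step (~~ o) t) = dual_wahl_mx P' Q'.
Proof.
move=> es et hs ht; rewrite !cf_mx_wahl_step // es et.
by case: o; split; rewrite /mx2_mul /=; congr Mx2; ring.
Qed.

Lemma wahl_chain_mx p q : coprime p q -> (0 < q < p)%N ->
  exists w, cf_mx (wahl_chain w) = wahl_mx p q /\
            cf_mx (dual_wahl_chain w) = dual_wahl_mx p q.
Proof.
elim/ltn_ind: p q => p IH q hc hq.
case: (ltngtP p q.*2) => hpq.
- have hc' : coprime q (q.*2 - p)%N by rewrite coprime_double_sub 1?coprime_sym // ltnW.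
  have [w [eb ea]] := IH q ltac:(lia) (q.*2 - p)%N hc' ltac:(lia).
  have [_ _ hsz _] := wahl_chain_invariants w.
  have hs := size_wahl_chain_gt0 w.
  have [eb' ea'] := cf_mx_wahl_steps false eb ea hs ltac:(lia).
  exists (false :: w); rewrite wahl_chain_cons dual_wahl_chain_cons eb' ea'.
  by have -> : 2 * q%:Z - (q.*2 - p)%N%:Z = p%:Z by lia.
- have hc' : coprime (p - q)%N q by rewrite coprime_subl // ltnW; lia.
  have [w [eb ea]] := IH (p - q)%N ltac:(lia) q hc' ltac:(lia).
  have [_ _ hsz _] := wahl_chain_invariants w.
  have hs := size_wahl_chain_gt0 w.
  have [eb' ea'] := cf_mx_wahl_steps true eb ea hs ltac:(lia).
  exists (true :: w); rewrite wahl_chain_cons dual_wahl_chain_cons eb' ea'.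
  by have -> : (p - q)%N%:Z + q%:Z = p%:Z by lia.
- have q1 : q = 1%N.
    by move: hc; rewrite /coprime hpq -muln2 (gcdn_idPr _) ?dvdn_mulr // => /eqP.
  by exists [::]; rewrite hpq q1; split; rewrite /= /mx2_mul /=; congr Mx2.
Qed.

Lemma cf_val_cons b t : (0 < size t)%N -> cf_val (b :: t) = b%:R - (cf_val t)^-1.
Proof. by case: t. Qed.

Lemma cf_mx_val s : (0 < size s)%N -> entries_ge2 s ->
  [/\ 0 < m21 (cf_mx s), m21 (cf_mx s) < m11 (cf_mx s) &
      cf_val s = (m11 (cf_mx s))%:~R / (m21 (cf_mx s))%:~R].
Proof.
elim: s => [//|b t IH] _ /andP[hb ht].
case: t IH ht => [|b2 t] IH ht.
  by rewrite /= /mx2_mul /=; split; [lia|lia|rewrite !mulr1 !mulr0 !addr0].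
have -> : cf_mx [:: b, b2 & t] = mx2_mul (hj_mx b) (cf_mx (b2 :: t)) by [].
rewrite cf_val_cons //; have [h1 h2 ->] := IH isT ht.
case: (cf_mx (b2 :: t)) h1 h2 => n x a y /= h1 h2.
split; [lia|nia|]; rewrite invf_div !intrD !intrM !mul0r !addr0 !mul1r.
have hn : (n%:~R : rat) != 0 by rewrite intr_eq0 gt_eqF // (lt_trans h1 h2).
by field; rewrite hn.
Qed.

Lemma cf_val_gt1 s : (0 < size s)%N -> entries_ge2 s -> 1 < cf_val s.
Proof.
move=> hs hge; have [h1 h2 ->] := cf_mx_val hs hge.
by rewrite ltr_pdivlMr ?mul1r ?ltr_int // ltr0z.
Qed.

Lemma cf_val_cons_lt b s : entries_ge2 s -> (0 < size s)%N ->
  b%:R - 1 < cf_val (b :: s) < b%:R.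
Proof.
move=> hge hs; rewrite cf_val_cons //; have h1 := cf_val_gt1 hs hge.
have h0 : 0 < (cf_val s)^-1 < 1.
  by rewrite invr_gt0 (lt_trans ltr01 h1) invf_lt1 // (lt_trans ltr01 h1).
by case/andP: h0 => ? ?; apply/andP; split; lra.
Qed.

Lemma cf_val_cons_bounds b s : entries_ge2 s ->
  b%:R - 1 < cf_val (b :: s) <= b%:R.
Proof.
case: s => [|x s] hge; first by rewrite /= lexx andbT; lra.
by case/andP: (cf_val_cons_lt b hge isT) => -> /ltW ->.
Qed.

Lemma cf_val_inj s t : (0 < size s)%N -> (0 < size t)%N ->
  entries_ge2 s -> entries_ge2 t -> cf_val s = cf_val t -> s = t.
Proof.
elim: s t => [//|b s IH] [//|c t] _ _ /andP[hb hs] /andP[hc ht] E.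
have ebc : b = c.
  move: (cf_val_cons_bounds b hs) (cf_val_cons_bounds c ht); rewrite E.
  case/andP=> l1 l2 /andP[l3 l4].
  have : b%:R < c.+1%:R :> rat by rewrite -natr1; lra.
  have : c%:R < b.+1%:R :> rat by rewrite -natr1; lra.
  by rewrite !ltr_nat; lia.
subst c; case: s t IH hs ht E => [|b2 s] [|c2 t] IH hs ht E //.
- by have := @cf_val_cons_lt b (c2 :: t) ht isT; rewrite -E /= ltxx andbF.
- by have := @cf_val_cons_lt b (b2 :: s) hs isT; rewrite E /= ltxx andbF.
- rewrite !(cf_val_cons b) // in E; move/addrI/oppr_inj/invr_inj: E => E.
  by rewrite (IH (c2 :: t)).
Qed.

Lemma cf_val_eq_cf_mx s t : entries_ge2 s -> entries_ge2 t -> (0 < size t)%N ->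
  cf_val s = (m11 (cf_mx t))%:~R / (m21 (cf_mx t))%:~R -> s = t.
Proof.
move=> hs ht t0; have [_ _ <-] := cf_mx_val t0 ht.
case: s hs => [_ E|b s hs E]; last exact: cf_val_inj.
by have := cf_val_gt1 t0 ht; rewrite -E ltr10.
Qed.

Lemma intr_div_nat (m n : int) (m' n' : nat) : m = m'%:Z -> n = n'%:Z ->
  m%:~R / n%:~R = m'%:R / n'%:R :> rat.
Proof. by move=> -> ->. Qed.

End ContinuedFractionMatrices.

Lemma perm_iota_nth (s : seq nat) n : perm_eq s (iota 0 n) ->
  [/\ size s = n, forall i, i < n -> nth 0 s i < n &
      forall i j, i < n -> j < n -> (nth 0 s i == nth 0 s j) = (i == j)].
Proof.
move=> hp; have hs : size s = n by rewrite (perm_size hp) size_iota.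
have hu : uniq s by rewrite (perm_uniq hp) iota_uniq.
split=> // [i hi|i j hi hj]; last by apply: nth_uniq; rewrite ?hs.
have : nth 0 s i \in iota 0 n by rewrite -(perm_mem hp) mem_nth ?hs.
by rewrite mem_iota.
Qed.

Lemma nth_insert (s : seq nat) k N i : k < size s ->
  nth 0 (take k.+1 s ++ N :: drop k.+1 s) i =
  if i <= k then nth 0 s i else if i == k.+1 then N else nth 0 s i.-1.
Proof.
move=> hk; rewrite nth_cat size_take_min (minn_idPl hk).
case: (leqP i k) => hik; first by rewrite ltnS hik nth_take.
rewrite ltnNge hik /=; case: eqP => [->|hi]; first by rewrite subnn.
have -> : i - k.+1 = (i - k.+2).+1 by lia.
by rewrite /= nth_drop; congr nth; lia.
Qed.

Lemma size_cw_blow_pt c v : v < size (cw c) -> size (cw (blow_pt c v)) = (size (cw c)).+1.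
Proof. by move=> hv; rewrite size_rcons size_set_nth (maxn_idPr hv). Qed.

Lemma size_cw_blow_int c u v : u < size (cw c) -> v < size (cw c) ->
  size (cw (blow_int c u v)) = (size (cw c)).+1.
Proof.
by move=> hu hv; rewrite size_rcons !size_set_nth (maxn_idPr hu) (maxn_idPr hv).
Qed.

Lemma nth_cw_blow_pt c v a : v < size (cw c) -> a <= size (cw c) ->
  nth 0%R (cw (blow_pt c v)) a =
  if a == size (cw c) then (-1)%R else (nth 0%R (cw c) a - (a == v)%:R)%R.
Proof.
move=> hv ha; rewrite nth_rcons size_set_nth (maxn_idPr hv) nth_set_nth /=.
case: (ltngtP a (size (cw c))) => [ha'|ha'|//]; last by lia.
by case: eqP => [->|_]; rewrite ?subr0 ?mulr1n.
Qed.

Lemma nth_cw_blow_int c u v a : u < size (cw c) -> v < size (cw c) ->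
  a <= size (cw c) ->
  nth 0%R (cw (blow_int c u v)) a =
  if a == size (cw c) then (-1)%R
  else (nth 0%R (cw c) a - (a == u)%:R - (a == v)%:R)%R.
Proof.
move=> hu hv ha; rewrite /blow_int nth_rcons !size_set_nth (maxn_idPr hu) (maxn_idPr hv).
case: (ltngtP a (size (cw c))) => [ha'|ha'|//]; last by lia.
rewrite nth_set_nth /= nth_set_nth /=.
case: (eqVneq a v) => [->|_].
  by case: (eqVneq v u) => [->|_]; rewrite ?subr0 ?mulr1n.
by rewrite nth_set_nth /=; case: (eqVneq a u) => [->|_]; rewrite ?subr0 ?mulr1n.
Qed.

Lemma ce_blow_pt_lt c v n : v < n -> size (cw c) <= n ->
  (forall e, e \in ce c -> (e.1 < n) && (e.2 < n)) ->
  forall e, e \in ce (blow_pt c v) -> (e.1 < n.+1) && (e.2 < n.+1).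
Proof.
move=> hv hc he e; rewrite inE => /orP[/eqP -> /=|/he /andP[h1 h2]].
  by rewrite !ltnS (ltnW hv) hc.
by rewrite !ltnS (ltnW h1) (ltnW h2).
Qed.

Lemma ce_blow_int_lt c u v n : u < n -> v < n -> size (cw c) <= n ->
  (forall e, e \in ce c -> (e.1 < n) && (e.2 < n)) ->
  forall e, e \in ce (blow_int c u v) -> (e.1 < n.+1) && (e.2 < n.+1).
Proof.
move=> hu hv hc he e; rewrite !inE mem_filter.
case/or3P=> [/eqP -> /=|/eqP -> /=|/andP[_ /he /andP[h1 h2]]].
- by rewrite !ltnS (ltnW hu) hc.
- by rewrite !ltnS (ltnW hv) hc.
- by rewrite !ltnS (ltnW h1) (ltnW h2).
Qed.

Lemma adj_fresh c n a : (forall e, e \in ce c -> (e.1 < n) && (e.2 < n)) ->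
  adj c n a = false /\ adj c a n = false.
Proof. by move=> h; rewrite /adj; split; apply/negbTE/negP => /orP[] /h /=; lia. Qed.

Lemma adj_blow_pt c v a b : adj (blow_pt c v) a b =
  [|| (a == v) && (b == size (cw c)), (b == v) && (a == size (cw c)) | adj c a b].
Proof.
rewrite /adj /= !inE !xpair_eqE.
by case: (a == v); case: (b == v); case: (a == _); case: (b == _);
   case: ((a, b) \in _); case: ((b, a) \in _).
Qed.

Lemma adj_blow_int c u v a b : adj (blow_int c u v) a b =
  [|| (a == u) && (b == size (cw c)), (a == v) && (b == size (cw c)),
      (b == u) && (a == size (cw c)), (b == v) && (a == size (cw c)) |
      adj c a b && ~~ (((a == u) && (b == v)) || ((a == v) && (b == u)))].
Proof.
rewrite /adj /= !inE !mem_filter !xpair_eqE.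
by case: (a == v); case: (b == v); case: (a == u); case: (b == u);
   case: (a == _); case: (b == _); case: ((a, b) \in _); case: ((b, a) \in _).
Qed.

(* The last clause keeps the index [size (cw c)] of the next exceptional curve fresh. *)
Definition chain_labelled (c : config) (ws : seq int) (s : seq nat) : Prop :=
  [/\ size (cw c) = size ws, perm_eq s (iota 0 (size ws)),
      forall i, i < size ws -> nth 0%R (cw c) (nth 0 s i) = nth 0%R ws i,
      forall i j, i < size ws -> j < size ws ->
        adj c (nth 0 s i) (nth 0 s j) = (i == j.+1) || (j == i.+1) &
      forall e, e \in ce c -> (e.1 < size ws) && (e.2 < size ws)].

Lemma chain_labelled_linear c ws s : chain_labelled c ws s -> is_linear_chain c ws.
Proof. by case=> hsz hp hw ha _; split=> //; exists s. Qed.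

Lemma mem_chain_edges m a b :
  ((a, b) \in [seq (i, i.+1) | i <- iota 0 m]) = (b == a.+1) && (a < m).
Proof.
apply/mapP/andP => [[x hx [-> ->]]|[/eqP -> ha]]; last by exists a; rewrite ?mem_iota.
by move: hx; rewrite mem_iota.
Qed.

Lemma chain_config_labelled ws :
  chain_labelled (chain_config ws) ws (iota 0 (size ws)).
Proof.
split=> //= [i hi|i j hi hj|[a b] /mapP[x]]; rewrite ?nth_iota //.
- by rewrite /adj /= !mem_chain_edges !add0n; apply/idP/idP; lia.
- by rewrite mem_iota => hx [-> ->] /=; lia.
Qed.

Lemma chain_labelled_blow_pt c L x s : chain_labelled c (L ++ [:: x]) s ->
  let c' := blow_pt c (nth 0 s (size L)) in
  blowup_step c c' /\ chain_labelled c' (L ++ [:: x - 1; -1]%R) (rcons s (size (cw c))).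
Proof.
case; rewrite size_cat addn1 => hsz hp hw ha he c'; set v := nth 0 s (size L) in c' *.
have [hs hlt hinj] := perm_iota_nth hp.
have hv : v < (size L).+1 := hlt _ (ltnSn _).
have hvc : v < size (cw c) by rewrite hsz.
have aoN a := adj_fresh a he.
split; first exact: BS_pt.
rewrite /chain_labelled size_cat /= addn2 (size_cw_blow_pt hvc) hsz.
split=> // [|i hi|i j hi hj|e].
- by rewrite -[(size L).+2]addn1 iotaD -cats1 perm_cat2r.
- rewrite [nth 0 (rcons s _) i]nth_rcons hs.
  case: (ltngtP i (size L).+1) => hin; [|lia|].
  + rewrite nth_cw_blow_pt //; last by rewrite hsz; apply/ltnW/hlt.
    rewrite hsz (ltn_eqF (hlt i hin)) /v hinj // hw //.
    rewrite !nth_cat.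
    by case: (ltngtP i (size L)) => hiL; [rewrite subr0|lia|rewrite hiL subnn mulr1n].
  + by rewrite hin -hsz nth_cw_blow_pt // eqxx hsz nth_cat ltnNge leqnSn subSnn.
- rewrite adj_blow_pt !nth_rcons hs hsz.
  case: (ltngtP i (size L).+1) => hin; [|lia|];
    case: (ltngtP j (size L).+1) => hjn; try lia.
  + by rewrite ha // (ltn_eqF (hlt j hjn)) (ltn_eqF (hlt i hin)) !andbF.
  + rewrite ?hjn ?ltnn eqxx (aoN _).2 hinj // andbT (ltn_eqF (hlt i hin)) andbF orbF.
    by apply/idP/idP; lia.
  + rewrite ?hin ?ltnn eqxx (aoN _).1 hinj // andbT (ltn_eqF (hlt j hjn)) andbF orbF.
    by apply/idP/idP; lia.
  + by rewrite ?hin ?hjn ?ltnn eqxx (aoN _).1 (gtn_eqF hv) /=; apply/esym/idP; lia.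
- by move: e; rewrite -hsz; apply: ce_blow_pt_lt; rewrite ?hsz.
Qed.

Ltac decide_ifs := repeat match goal with
  |- context[if ?b then _ else _] =>
     (have -> : b = true by lia) || (have -> : b = false by apply/negbTE; lia)
  end.

Lemma nth_blow_edge_weights (L R : seq int) x y i :
  nth 0%R (L ++ (x - 1) :: -1 :: (y - 1) :: R)%R i =
  if i <= size L then (nth 0%R (L ++ x :: y :: R) i - (i == size L)%:R)%R
  else if i == (size L).+1 then (-1)%R
  else (nth 0%R (L ++ x :: y :: R) i.-1 - (i == (size L).+2)%:R)%R.
Proof.
rewrite !nth_cat; case: (ltngtP i (size L)) => [_|hi|->]; last by rewrite subnn mulr1n.
  by rewrite subr0.
have [m ->] : exists m, i = size L + m.+1 by exists (i - (size L).+1); lia.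
rewrite addKn /= addnS /= addKn ltnNge leq_addr /=.
case: m => [|[|m]]; decide_ifs => //; first by rewrite addn1 eqxx mulr1n.
by rewrite (_ : _ == _ = false) ?subr0 //; lia.
Qed.

Lemma perm_insert_iota (s : seq nat) n k : perm_eq s (iota 0 n) ->
  perm_eq (take k s ++ n :: drop k s) (iota 0 n.+1).
Proof.
move=> hp; apply: (perm_trans (y := n :: s)).
  by rewrite -cat1s perm_catCA /= cat_take_drop.
by rewrite -addn1 iotaD perm_sym perm_catC /= perm_cons perm_sym.
Qed.

Lemma chain_labelled_blow_int c L x y R s : chain_labelled c (L ++ x :: y :: R) s ->
  let c' := blow_int c (nth 0 s (size L)) (nth 0 s (size L).+1) in
  blowup_step c c' /\
  chain_labelled c' (L ++ (x - 1) :: -1 :: (y - 1) :: R)%R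
    (take (size L).+1 s ++ size (cw c) :: drop (size L).+1 s).
Proof.
case; rewrite size_cat /= !addnS => hsz hp hw ha he.
set k := size L in hsz hp hw ha he *.
set n := (k + size R).+2 in hsz hp hw ha he *.
have [hs hlt hinj] := perm_iota_nth hp.
have hu : nth 0 s k < size (cw c) by rewrite hsz hlt /n; lia.
have hv : nth 0 s k.+1 < size (cw c) by rewrite hsz hlt /n; lia.
have hkn : k.+1 < n by rewrite /n; lia.
have hneN i : i < n -> (nth 0 s i == n) = false by move=> hi; apply/ltn_eqF/hlt.
have hNe i : i < n -> (n == nth 0 s i) = false by move=> hi; apply/gtn_eqF/hlt.
have aoN a := adj_fresh a he.
split; first by apply: BS_int; rewrite ?hinj ?ha /n; lia.
have hw_blown i : i < n -> nth 0%R (cw (blow_int c (nth 0 s k) (nth 0 s k.+1))) (nth 0 s i) =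
    (nth 0%R (L ++ x :: y :: R) i - (i == k)%:R - (i == k.+1)%:R)%R.
  move=> hi; rewrite nth_cw_blow_int // ?hsz ?hneN // ?hinj ?hw //; try lia.
  exact/ltnW/hlt.
rewrite /chain_labelled size_cat /= !addnS -/k -/n (size_cw_blow_int hu hv) hsz.
split=> // [|i hi|i j hi hj|e]; first exact: perm_insert_iota.
- rewrite nth_insert ?hs ?(ltnW hkn) // nth_blow_edge_weights -/k.
  case: (leqP i k) => hik.
    by rewrite hw_blown ?(ltn_eqF (hik : i < k.+1)) ?subr0 // (leq_ltn_trans hik (ltnW hkn)).
  case: eqP => [_|hik1]; first by rewrite -hsz nth_cw_blow_int // eqxx.
  rewrite hw_blown; last by move: hi; rewrite /n; lia.
  have -> : (i.-1 == k) = false by lia.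
  have -> : (i.-1 == k.+1) = (i == k.+2) by lia.
  by rewrite subr0.
- rewrite !nth_insert ?hs ?(ltnW hkn) // adj_blow_int hsz.
  case: (leqP i k) => hi1; [|case: (eqVneq i k.+1) => hi2];
  case: (leqP j k) => hj1; try case: (eqVneq j k.+1) => hj2; decide_ifs;
  (* turn every test on labels into a test on positions *)
  repeat match goal with
   | |- context[nth 0 s ?a == nth 0 s ?b] => rewrite (hinj a b); [|lia|lia]
   | |- context[nth 0 s ?a == n] => rewrite (hneN a); [|lia]
   | |- context[n == nth 0 s ?a] => rewrite (hNe a); [|lia]
   | |- context[adj c n ?a] => rewrite (aoN a).1
   | |- context[adj c ?a n] => rewrite (aoN a).2
   | |- context[adj c (nth 0 s ?a) (nth 0 s ?b)] => rewrite (ha a b); [|lia|lia]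
  end; rewrite ?eqxx /=; apply/idP/idP; lia.
- by move: e; rewrite -hsz; apply: ce_blow_int_lt => //; rewrite hsz.
Qed.

Lemma blowups_rcons c1 c2 c3 : blowups c1 c2 -> blowup_step c2 c3 -> blowups c1 c3.
Proof.
elim=> [c hs|x y z hxy _ IH hs]; last exact: BL_step hxy (IH hs).
exact: BL_step hs (BL_refl _).
Qed.

Definition blowups_to_chain (c0 : config) (ws : seq int) : Prop :=
  exists c s, blowups c0 c /\ chain_labelled c ws s.

Lemma blowups_to_chain_end c0 L x : blowups_to_chain c0 (L ++ [:: x]) ->
  blowups_to_chain c0 (L ++ [:: x - 1; -1]%R).
Proof.
case=> c [s [hb /chain_labelled_blow_pt [hst hc]]].
by do 2 eexists; split; [exact: blowups_rcons hst|exact: hc].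
Qed.

Lemma blowups_to_chain_edge c0 L x y R : blowups_to_chain c0 (L ++ x :: y :: R) ->
  blowups_to_chain c0 (L ++ (x - 1) :: -1 :: (y - 1) :: R)%R.
Proof.
case=> c [s [hb /chain_labelled_blow_int [hst hc]]].
by do 2 eexists; split; [exact: blowups_rcons hst|exact: hc].
Qed.

Definition neg_weights_hd (d : nat) (xs : seq nat) : seq int :=
  if xs is x :: t then (- (x + d)%:Z)%R :: neg_weights t else [::].

Lemma neg_weights_hd0 xs : neg_weights_hd 0 xs = neg_weights xs.
Proof. by case: xs => [//|x t] /=; rewrite addn0. Qed.

Lemma neg_weights_hd_incr_head d xs :
  neg_weights_hd d (incr_head xs) = neg_weights_hd d.+1 xs.
Proof. by case: xs => [//|x t] /=; rewrite addSnnS. Qed.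

Lemma neg_weights_hd_cat d xs ys : (0 < size xs)%N ->
  neg_weights_hd d (xs ++ ys) = neg_weights_hd d xs ++ neg_weights ys.
Proof. by case: xs => [//|x t] _ /=; rewrite /neg_weights map_cat. Qed.

(* Generalized over a prefix [pre] and an extra weight [d] on the first curve, which
   is what the induction on [w] needs. *)
Lemma blowups_to_chain_wahl w pre d c0 :
  blowups_to_chain c0 (pre ++ neg_weights_hd d (delta_half_chain (wahl_chain w))) ->
  blowups_to_chain c0 (pre ++ neg_weights_hd d (wahl_chain w ++ 1%N ::
     rev (drop (delta_pos (wahl_chain w)).2.+1 (dual_wahl_chain w)))).
Proof.
elim: w pre d => [|o w IH] pre d.
  move/blowups_to_chain_end.
  by congr (blowups_to_chain _ (_ ++ [:: _; _])); rewrite /=; lia.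
have [ge2 dots sz_dual delta_le] := wahl_chain_invariants w.
have hs := size_wahl_chain_gt0 w.
case: o.
- have [Ej Eh] := delta_wahl_step_true ge2 dots.
  rewrite wahl_chain_cons Eh neg_weights_hd_incr_head => /IH.
  rewrite Ej dual_wahl_chain_cons /= drop_incr_last rev_incr_last.
  case: (rev _) => [|y A]; rewrite -incr_head_cat ?size_rcons // cat_rcons
    neg_weights_hd_incr_head !neg_weights_hd_cat //= !catA.
  + by move/blowups_to_chain_end; congr (blowups_to_chain _ (_ ++ [:: _; _])); lia.
  + move/blowups_to_chain_edge.
    by congr (blowups_to_chain _ (_ ++ [:: _, _, _ & _])); lia.
- have [Ej Eh] := delta_wahl_step_false ge2 dots.
  rewrite wahl_chain_cons Eh [neg_weights_hd _ (_ :: _)]/= -cat_rcons -neg_weights_hd0.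
  move=> /IH.
  rewrite Ej dual_wahl_chain_cons drop_incr_head drop_rcons ?rev_rcons; last lia.
  rewrite neg_weights_hd0 /wahl_step /=.
  case/lastP: (wahl_chain w) hs => [//|bt x] _.
  rewrite incr_last_rcons /neg_weights !map_cat !map_rcons -!cats1 -!catA /=.
  rewrite -!cat_cons !catA.
  by move/blowups_to_chain_edge; congr (blowups_to_chain _ (_ ++ [:: _, _, _ & _])); lia.
Qed.

Lemma delta_half_chain_blowups_wahl w :
  exists c : config,
    blowups (chain_config (neg_weights (delta_half_chain (wahl_chain w)))) c /\
    is_linear_chain c (neg_weights (wahl_chain w) ++ (-1)%R ::
      neg_weights (rev (drop (delta_pos (wahl_chain w)).2.+1 (dual_wahl_chain w)))).
Proof.
have [|c [s [hb /chain_labelled_linear hc]]] := @blowups_to_chain_wahl w [::] 0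
  (chain_config (neg_weights (delta_half_chain (wahl_chain w)))).
  rewrite neg_weights_hd0; do 2 eexists.
  by split; [exact: BL_refl|exact: chain_config_labelled].
by exists c; split=> //; move: hc; rewrite neg_weights_hd0 /neg_weights map_cat.
Qed.

Lemma wahl_chains_of_cf p q bs as_ :
  coprime p q -> 0 < q < p ->
  entries_ge2 bs -> cf_val bs = ((p ^ 2)%:R / (p * q - 1)%:R)%R ->
  entries_ge2 as_ -> cf_val as_ = ((p ^ 2)%:R / (p ^ 2 - p * q + 1)%:R)%R ->
  exists w, bs = wahl_chain w /\ as_ = dual_wahl_chain w.
Proof.
move=> hc hqp hbs Ebs has Eas; have [w [eb ea]] := wahl_chain_mx hc hqp.
have [ge2 _ sz_dual _] := wahl_chain_invariants w.
exists w; split; apply: cf_val_eq_cf_mx;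
  rewrite ?dual_wahl_chain_ge2 ?size_wahl_chain_gt0 ?sz_dual //.
- by rewrite Ebs eb; apply/esym/intr_div_nat => /=; nia.
- by rewrite Eas ea; apply/esym/intr_div_nat => /=; nia.
Qed.

Theorem corollary3p13 (p q : nat) (bs as_ : seq nat) :
  coprime p q -> 1 <= q -> q < p ->
  all (fun b => 2 <= b) bs ->
  cf_val bs = ((p ^ 2)%:R / (p * q - 1)%:R)%R ->
  all (fun a => 2 <= a) as_ ->
  cf_val as_ = ((p ^ 2)%:R / (p ^ 2 - p * q + 1)%:R)%R ->
  let j := (delta_pos bs).2 in
  exists c : config,
    blowups (chain_config (neg_weights (delta_half_chain bs))) c /\
    is_linear_chain c
      (neg_weights bs ++ (-1)%R :: neg_weights (rev (drop j.+1 as_))).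
Proof.
move=> hc hq hqp hbs Ebs has Eas.
have [w [-> ->]] := wahl_chains_of_cf hc (introT andP (conj hq hqp)) hbs Ebs has Eas.
exact: delta_half_chain_blowups_wahl.
Qed.
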